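(* Let $\sigma\subset\mathbb{R}^m$ be an $m$-simplex and $F\colon\sigma\to\mathbb{R}^m$ a $\xi$-distortion map that fixes each vertex of $\sigma$, with $\xi\le1$. Then for every $x\in\sigma$, $$\|x-F(x)\|\le\frac{3\xi L}{t},$$ where $L=L(\sigma)$ and $t=t(\sigma)$.
   Context: $F$ is a $\xi$-distortion map if $\bigl|\|F(x)-F(y)\|-\|x-y\|\bigr|\le\xi\|x-y\|$ for all $x,y$ in the domain. For an $m$-simplex $\sigma$ ($m\ge1$), $L(\sigma)$ is the length of its longest edge, $a(\sigma)$ is its smallest altitude (distance from a vertex to the affine hull of the opposite facet), and its thickness is $t(\sigma)=a(\sigma)/(mL(\sigma))$. *)

From HB Require Import structures.
From mathcomp Require Import all_boot all_order all_algebra.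
Set Implicit Arguments. Unset Strict Implicit. Unset Printing Implicit Defensive.
Import Order.TTheory GRing.Theory Num.Theory.
Local Open Scope ring_scope.

Definition enorm (R : rcfType) (m : nat) (x : 'rV[R]_m) : R :=
  Num.sqrt (\sum_(k < m) x ord0 k ^+ 2).

(* An m-simplex is given by its m+1 vertices v : 'I_m.+1 -> R^m,
   which must be affinely independent. *)
Definition aff_indep (R : rcfType) (m : nat) (v : 'I_m.+1 -> 'rV[R]_m) : Prop :=
  forall w : 'I_m.+1 -> R,
    \sum_i w i = 0 -> \sum_i w i *: v i = 0 -> forall i, w i = 0.

Definition in_simplex (R : rcfType) (m : nat) (v : 'I_m.+1 -> 'rV[R]_m)
  (x : 'rV[R]_m) : Prop :=
  exists w : 'I_m.+1 -> R,
    [/\ forall i, 0 <= w i, \sum_i w i = 1 & x = \sum_i w i *: v i].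

Definition in_opp_facet_hull (R : rcfType) (m : nat) (v : 'I_m.+1 -> 'rV[R]_m)
  (i : 'I_m.+1) (p : 'rV[R]_m) : Prop :=
  exists w : 'I_m.+1 -> R,
    [/\ w i = 0, \sum_j w j = 1 & p = \sum_j w j *: v j].

Definition is_altitude (R : rcfType) (m : nat) (v : 'I_m.+1 -> 'rV[R]_m)
  (i : 'I_m.+1) (d : R) : Prop :=
  (forall p, in_opp_facet_hull v i p -> d <= enorm (v i - p)) /\
  (forall e, d < e -> exists p, in_opp_facet_hull v i p /\ enorm (v i - p) < e).

Definition is_min_altitude (R : rcfType) (m : nat) (v : 'I_m.+1 -> 'rV[R]_m)
  (a : R) : Prop :=
  (exists i, is_altitude v i a) /\ (forall i d, is_altitude v i d -> a <= d).

Definition longest_edge (R : rcfType) (m : nat) (v : 'I_m.+1 -> 'rV[R]_m) : R :=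
  \big[Num.max/0]_(i < m.+1) \big[Num.max/0]_(j < m.+1) enorm (v i - v j).

Definition thickness (R : rcfType) (m : nat) (v : 'I_m.+1 -> 'rV[R]_m) (a : R) : R :=
  a / (m%:R * longest_edge v).

Definition distortion_on (R : rcfType) (m : nat) (v : 'I_m.+1 -> 'rV[R]_m)
  (F : 'rV[R]_m -> 'rV[R]_m) (xi : R) : Prop :=
  forall x y, in_simplex v x -> in_simplex v y ->
    `| enorm (F x - F y) - enorm (x - y) | <= xi * enorm (x - y).

(** Write u := F x - x. Since F fixes every vertex v_k and distorts distances
    by a factor at most ξ, |F x - v_k|^2 and |x - v_k|^2 differ by at most
    3ξL^2, i.e. u·(v_k - x) = |u|^2/2 up to 3ξL^2/2, uniformly in k.
    Expanding u = Σ c_k v_k with Σ c_k = 0, where c_k = u·∇λ_k is the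
    derivative of the k-th barycentric coordinate in direction u, gives
    |u|^2 = Σ c_k (u·(v_k - x) - |u|^2/2) ≤ (m+1) · |u|/a · 3ξL^2/2,
    because |∇λ_k| is the inverse of the k-th altitude, hence at most 1/a.
    Dividing by |u| and using (m+1)/2 ≤ m gives |u| ≤ 3ξ L · mL/a = 3ξL/t. *)
From HB Require Import structures.
From mathcomp Require Import all_boot all_order all_algebra.
From mathcomp Require Import ring lra.
Import Order.TTheory GRing.Theory Num.Theory.
Local Open Scope ring_scope.
Set Implicit Arguments. Unset Strict Implicit. Unset Printing Implicit Defensive.

Section Dot.
Variables (R : rcfType) (m : nat).
Implicit Types u w z : 'rV[R]_m.

Definition dot u w : R := \sum_(k < m) u ord0 k * w ord0 k.

Lemma dotC u w : dot u w = dot w u.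
Proof. by apply: eq_bigr => k _; rewrite mulrC. Qed.

Lemma dotDl u w z : dot (u + w) z = dot u z + dot w z.
Proof. by rewrite /dot -big_split; apply: eq_bigr => k _; rewrite !mxE mulrDl. Qed.

Lemma dotZl a u z : dot (a *: u) z = a * dot u z.
Proof. by rewrite /dot mulr_sumr; apply: eq_bigr => k _; rewrite !mxE mulrA. Qed.

Lemma dotNl u z : dot (- u) z = - dot u z.
Proof. by rewrite -scaleN1r dotZl mulN1r. Qed.

Lemma dotBl u w z : dot (u - w) z = dot u z - dot w z.
Proof. by rewrite dotDl dotNl. Qed.

Lemma dotZr a u z : dot z (a *: u) = a * dot z u.
Proof. by rewrite dotC dotZl dotC. Qed.

Lemma dotBr u w z : dot z (u - w) = dot z u - dot z w.
Proof. by rewrite dotC dotBl !(dotC z). Qed.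

Lemma dot0l z : dot 0 z = 0.
Proof. by rewrite -(scale0r 0) dotZl mul0r. Qed.

Lemma dot0r z : dot z 0 = 0.
Proof. by rewrite dotC dot0l. Qed.

Lemma dot_sumr (I : finType) (f : I -> 'rV[R]_m) z :
  dot z (\sum_i f i) = \sum_i dot z (f i).
Proof.
rewrite /dot exchange_big /=; apply: eq_bigr => k _.
by rewrite summxE mulr_sumr.
Qed.

Lemma dot_ge0 u : 0 <= dot u u.
Proof. by apply: sumr_ge0 => k _; rewrite -expr2 sqr_ge0. Qed.

Lemma dot_eq0 u : dot u u = 0 -> u = 0.
Proof.
move=> u0; apply/rowP => k; rewrite mxE.
have sq_ge0 (i : 'I_m) : predT i -> 0 <= u ord0 i * u ord0 i.
  by rewrite -expr2 sqr_ge0.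
have /eqP := psumr_eq0P sq_ge0 u0 (isT : predT k).
by rewrite mulf_eq0 orbb => /eqP.
Qed.

Lemma enormE u : enorm u = Num.sqrt (dot u u).
Proof. by congr Num.sqrt; apply: eq_bigr => k _; rewrite expr2. Qed.

Lemma enorm_ge0 u : 0 <= enorm u.
Proof. exact: sqrtr_ge0. Qed.

Lemma enorm_sq u : enorm u ^+ 2 = dot u u.
Proof. by rewrite enormE sqr_sqrtr // dot_ge0. Qed.

Lemma enorm_gt0 u : (0 < enorm u) = (u != 0).
Proof.
rewrite lt_def enorm_ge0 andbT; apply/idP/idP; apply: contra_neq.
- by move=> ->; rewrite enormE dot0l sqrtr0.
- by move=> u0; apply: dot_eq0; rewrite -enorm_sq u0 expr0n.
Qed.

Lemma enormN u : enorm (- u) = enorm u.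
Proof. by rewrite !enormE dotNl dotC dotNl opprK. Qed.

Lemma enormZ a u : enorm (a *: u) = `|a| * enorm u.
Proof.
by rewrite !enormE dotZl dotZr mulrA -expr2 sqrtrM ?sqr_ge0 // sqrtr_sqr.
Qed.

Lemma enorm_sqrB u z :
  enorm (u - z) ^+ 2 = enorm u ^+ 2 - 2 * dot u z + enorm z ^+ 2.
Proof. by rewrite !enorm_sq !dotBl !dotBr (dotC z u); ring. Qed.

Lemma cauchy_schwarz u w : `|dot u w| <= enorm u * enorm w.
Proof.
set A := dot u u; set B := dot w w; set C := dot u w.
have C2_le : C ^+ 2 <= A * B.
  have [/dot_eq0 w0|B_neq0] := eqVneq B 0.
    by rewrite /C w0 dot0r expr0n /= mulr_ge0 ?dot_ge0.
  have B_gt0 : 0 < B by rewrite lt_def B_neq0 dot_ge0.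
  have := dot_ge0 (B *: u - C *: w).
  rewrite !dotBl !dotBr !dotZl !dotZr -/A -/B (dotC w u) -/C => h.
  have : 0 <= B * (A * B - C ^+ 2) by move: h; congr (_ <= _); ring.
  by rewrite pmulr_rge0 // subr_ge0.
rewrite !enormE -sqrtrM ?dot_ge0 // -sqrtr_sqr.
by rewrite ler_sqrt ?mulr_ge0 ?dot_ge0.
Qed.

End Dot.

Lemma is_altitude_unique (R : rcfType) (m : nat) (v : 'I_m.+1 -> 'rV[R]_m) k d d' :
  is_altitude v k d -> is_altitude v k d' -> d = d'.
Proof.
have le_alt e e' : is_altitude v k e -> is_altitude v k e' -> e <= e'.
  move=> [e_le _] [_ e'_inf]; rewrite leNgt; apply/negP => /e'_inf [p [hp lt_e]].
  by have := e_le p hp; rewrite leNgt lt_e.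
by move=> hd hd'; apply/le_anti; rewrite !le_alt.
Qed.

Lemma longest_edge_ge (R : rcfType) (m : nat) (v : 'I_m.+1 -> 'rV[R]_m) i j :
  enorm (v i - v j) <= longest_edge v.
Proof.
rewrite /longest_edge (bigD1 i) //= le_max; apply/orP; left.
by rewrite (bigD1 j) //= le_max lexx.
Qed.

Lemma enorm_sub_vertex_le (R : rcfType) (m : nat) (v : 'I_m.+1 -> 'rV[R]_m) x k :
  in_simplex v x -> enorm (x - v k) <= longest_edge v.
Proof.
case=> w [w_ge0 w1 ->]; set s := _ - v k.
have sE : s = \sum_j w j *: (v j - v k).
  by under eq_bigr do rewrite scalerBr; rewrite sumrB -scaler_suml w1 scale1r.
have L_ge0 := le_trans (enorm_ge0 _) (longest_edge_ge v k k).
suff : enorm s ^+ 2 <= enorm s * longest_edge v by have := enorm_ge0 s; nra.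
rewrite enorm_sq {2}sE dot_sumr.
apply: le_trans (_ : \sum_j w j * (enorm s * longest_edge v) <= _); last first.
  by rewrite -mulr_suml w1 mul1r.
apply: ler_sum => j _; rewrite dotZr ler_wpM2l //.
apply: le_trans (ler_norm _) _; apply: le_trans (cauchy_schwarz _ _) _.
by rewrite ler_wpM2l ?enorm_ge0 ?longest_edge_ge.
Qed.

Lemma sum_delta (R : nzRingType) (V : lmodType R) (I : finType) (j : I) (f : I -> V) :
  \sum_i ((i == j)%:R : R) *: f i = f j.
Proof.
by rewrite (bigD1 j) //= eqxx scale1r big1 ?addr0 // => i /negbTE ->; rewrite scale0r.
Qed.

Lemma sum_delta1 (R : nzRingType) (I : finType) (j : I) : \sum_i ((i == j)%:R : R) = 1.
Proof. by rewrite (bigD1 j) //= eqxx big1 ?addr0 // => i /negbTE ->. Qed.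

Lemma in_simplex_vertex (R : rcfType) (m : nat) (v : 'I_m.+1 -> 'rV[R]_m) j :
  in_simplex v (v j).
Proof. by exists (fun i => (i == j)%:R); split; rewrite ?sum_delta1 ?sum_delta. Qed.

Section Barycentric.
Variables (R : rcfType) (m : nat) (v : 'I_m.+1 -> 'rV[R]_m).
Hypothesis v_indep : aff_indep v.

(** The rows of [vertex_mx] are [(v i, 1)], so inverting it gives the
    barycentric coordinates [bary p] of a point, the zero-sum coordinates
    [dbary u] of a displacement, and the gradient [bary_grad k] of the [k]-th
    barycentric coordinate. *)
Definition vertex_mx : 'M[R]_(m.+1, m + 1) :=
  \matrix_i row_mx (v i) (1%:M : 'M_1).

Definition bary (p : 'rV[R]_m) : 'rV[R]_m.+1 :=
  row_mx p (1%:M : 'M_1) *m pinvmx vertex_mx.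

Definition dbary (u : 'rV[R]_m) : 'rV[R]_m.+1 :=
  row_mx u (0 : 'M_1) *m pinvmx vertex_mx.

Definition bary_grad (k : 'I_m.+1) : 'rV[R]_m :=
  \row_l pinvmx vertex_mx (lshift 1 l) k.

Lemma mul_vertex_mx (w : 'rV_m.+1) :
  w *m vertex_mx = row_mx (\sum_i w 0 i *: v i) (\sum_i w 0 i)%:M.
Proof.
rewrite mulmx_sum_row -[LHS]hsubmxK; congr row_mx.
  rewrite linear_sum; apply: eq_bigr => i _.
  by rewrite linearZ /= rowK row_mxKl.
rewrite linear_sum raddf_sum; apply: eq_bigr => i _.
by rewrite linearZ /= rowK row_mxKr scalemx1.
Qed.

Lemma scalar_mx1_inj (a b : R) : (a%:M : 'M[R]_1) = b%:M -> a = b.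
Proof. by move/(congr1 (fun M : 'M_1 => M 0 0)); rewrite !mxE eqxx !mulr1n. Qed.

Lemma vertex_mx_inj (w w' : 'rV[R]_m.+1) :
  w *m vertex_mx = w' *m vertex_mx -> w = w'.
Proof.
move=> /eqP; rewrite -subr_eq0 -mulmxBl mul_vertex_mx row_mx_eq0.
move=> /andP[/eqP comb0 /eqP sum0]; apply/eqP; rewrite -subr_eq0; apply/eqP.
have sum0' : \sum_i (w - w') 0 i = 0.
  by apply: scalar_mx1_inj; rewrite sum0 -scalemx1 scale0r.
by apply/rowP => i; rewrite (v_indep sum0' comb0) mxE.
Qed.

Lemma row_full_vertex_mx : row_full vertex_mx.
Proof.
suff /eqP : row_free vertex_mx by rewrite /row_full => ->; rewrite addn1.
rewrite -kermx_eq0; apply/eqP/row_matrixP => i; rewrite row0.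
by apply: vertex_mx_inj; rewrite -row_mul mulmx_ker row0 mul0mx.
Qed.

Lemma pinvmx_vertex_mxK (r : 'rV_(m + 1)) : r *m pinvmx vertex_mx *m vertex_mx = r.
Proof. exact/mulmxKpV/submx_full/row_full_vertex_mx. Qed.

Lemma bary_sum p : \sum_i bary p 0 i *: v i = p /\ \sum_i bary p 0 i = 1.
Proof.
have := pinvmx_vertex_mxK (row_mx p 1%:M).
by rewrite mul_vertex_mx => /eq_row_mx[-> /scalar_mx1_inj].
Qed.

Lemma dbary_sum u : \sum_i dbary u 0 i *: v i = u /\ \sum_i dbary u 0 i = 0.
Proof.
have := pinvmx_vertex_mxK (row_mx u 0); rewrite mul_vertex_mx => /eq_row_mx[-> s0].
by split=> //; apply: scalar_mx1_inj; rewrite s0 -scalemx1 scale0r.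
Qed.

Lemma bary_eq (w : 'I_m.+1 -> R) p :
  \sum_i w i = 1 -> p = \sum_i w i *: v i -> bary p = \row_i w i.
Proof.
move=> w1 ->; apply: vertex_mx_inj; rewrite pinvmx_vertex_mxK mul_vertex_mx.
by congr row_mx; [|congr _%:M; rewrite -w1]; apply: eq_bigr => i _; rewrite mxE.
Qed.

Lemma bary_vertex k : bary (v k) = 'e_k.
Proof. by apply: vertex_mx_inj; rewrite pinvmx_vertex_mxK -rowE rowK. Qed.

Lemma baryB p q : bary p - bary q = dbary (p - q).
Proof.
apply: vertex_mx_inj; rewrite mulmxBl !pinvmx_vertex_mxK.
by rewrite opp_row_mx add_row_mx subrr.
Qed.

Lemma dot_bary_grad u k : dot u (bary_grad k) = dbary u 0 k.
Proof.
rewrite !mxE big_split_ord /= [X in _ + X]big1 ?addr0.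
  by apply: eq_bigr => l _; rewrite row_mxEl !mxE.
by move=> l _; rewrite row_mxEr mxE mul0r.
Qed.

Lemma dot_dbary_expansion u p s :
  dot u u = \sum_k dbary u 0 k * (dot u (v k - p) - s).
Proof.
have [comb sum0] := dbary_sum u.
suff -> : \sum_k dbary u 0 k * (dot u (v k - p) - s) =
  dot u (\sum_k dbary u 0 k *: v k) - (\sum_k dbary u 0 k) * (dot u p + s).
  by rewrite comb sum0 mul0r subr0.
rewrite dot_sumr mulr_suml -sumrB; apply: eq_bigr => k _.
by rewrite dotZr dotBr; ring.
Qed.

Lemma dot_opp_facet_bary_grad k p :
  in_opp_facet_hull v k p -> dot (v k - p) (bary_grad k) = 1.
Proof.
case=> w [wk0 w1 pE].
by rewrite dot_bary_grad -baryB bary_vertex (bary_eq w1 pE) !mxE !eqxx wk0 subr0.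
Qed.

Lemma vertex_inj : injective v.
Proof.
move=> i j /(congr1 (fun p => bary p 0 i)).
rewrite !bary_vertex !mxE !eqxx /=; case: eqVneq => // _ /eqP.
by rewrite /= oner_eq0.
Qed.

Hypothesis m_gt0 : (0 < m)%N.

Lemma exists_other_vertex k : exists j : 'I_m.+1, j != k.
Proof. by exists (lift k (Ordinal m_gt0)); rewrite eq_sym neq_lift. Qed.

Lemma enorm_bary_grad_gt0 k : 0 < enorm (bary_grad k).
Proof.
have [j jk] := exists_other_vertex k.
have facet_j : in_opp_facet_hull v k (v j).
  exists (fun i => (i == j)%:R); split; first by rewrite eq_sym (negbTE jk).
    exact: sum_delta1.
  by rewrite sum_delta.
rewrite enorm_gt0; apply: contra_eqN (dot_opp_facet_bary_grad facet_j) => /eqP ->.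
by rewrite dot0r eq_sym oner_eq0.
Qed.

(** The foot of the altitude is [v k - (bary_grad k) / |bary_grad k|^2]. *)
Lemma is_altitude_bary_grad k : is_altitude v k (enorm (bary_grad k))^-1.
Proof.
have g_gt0 := enorm_bary_grad_gt0 k; set g := bary_grad k.
split=> [p /dot_opp_facet_bary_grad dot1|e lt_e].
  have := cauchy_schwarz (v k - p) g; rewrite dot1 ger0_norm // => le1.
  by rewrite -[_^-1]mul1r ler_pdivrMr.
set s := (enorm g ^+ 2)^-1; have s_gt0 : 0 < s by rewrite invr_gt0 exprn_gt0.
exists (v k - s *: g); split; last first.
  rewrite subKr enormZ gtr0_norm // /s expr2 invfM -mulrA mulVf ?mulr1 //.
  by rewrite gt_eqF.
have [comb sum1] := bary_sum (v k - s *: g).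
exists (fun i => bary (v k - s *: g) 0 i); split=> //.
have -> : bary (v k - s *: g) = 'e_k - dbary (s *: g).
  by have := baryB (v k) (v k - s *: g); rewrite subKr bary_vertex => <-; rewrite subKr.
rewrite mxE [X in _ + X]mxE [X in X + _]mxE -dot_bary_grad dotZl -enorm_sq !eqxx.
by rewrite /s mulVf ?subrr // expf_neq0 // gt_eqF.
Qed.

Lemma min_altitudeE a : is_min_altitude v a ->
  0 < a /\ forall k, a * enorm (bary_grad k) <= 1.
Proof.
move=> [[i alt_i] a_min]; split.
  rewrite (is_altitude_unique alt_i (is_altitude_bary_grad i)) invr_gt0.
  exact: enorm_bary_grad_gt0.
move=> k; rewrite -ler_pdivlMr ?enorm_bary_grad_gt0 // mul1r.
exact/a_min/is_altitude_bary_grad.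
Qed.

Lemma enorm_le_of_dot_bound u p (s K a : R) :
  0 < a -> (forall k, a * enorm (bary_grad k) <= 1) ->
  (forall k, `|dot u (v k - p) - s| <= K) -> enorm u <= m.+1%:R * K / a.
Proof.
move=> a_gt0 a_le dot_le; set N := enorm u.
have K_ge0 : 0 <= K := le_trans (normr_ge0 _) (dot_le 0).
have [N0|N_neq0] := eqVneq N 0; first by rewrite N0; apply/divr_ge0/ltW/a_gt0/mulr_ge0.
have N_gt0 : 0 < N by rewrite lt_def N_neq0 enorm_ge0.
have coord_le k : `|dbary u 0 k| <= N / a.
  rewrite -dot_bary_grad ler_pdivlMr //.
  apply: le_trans (ler_wpM2r (ltW a_gt0) (cauchy_schwarz _ _)) _.
  by rewrite -mulrA [_ * a]mulrC ler_piMr ?enorm_ge0.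
suff : N * N <= N * (m.+1%:R * K / a) by rewrite ler_pM2l.
rewrite -expr2 /N enorm_sq (dot_dbary_expansion u p s).
apply: le_trans (ler_norm _) _; apply: le_trans (ler_norm_sum _ _ _) _.
apply: le_trans (_ : \sum_(k < m.+1) N / a * K <= _).
  by apply: ler_sum => k _; rewrite normrM ler_pM.
rewrite sumr_const card_ord -[_ *+ _]mulr_natl le_eqVlt; apply/orP; left.
by apply/eqP; rewrite /N; field; rewrite gt_eqF.
Qed.

End Barycentric.

Lemma distortion_on_ge0 (R : rcfType) (m : nat) (v : 'I_m.+1 -> 'rV[R]_m) F xi x y :
  distortion_on v F xi -> in_simplex v x -> in_simplex v y -> x != y -> 0 <= xi.
Proof.
move=> F_dist hx hy xy; rewrite -(pmulr_lge0 _ (_ : 0 < enorm (x - y))).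
  exact: le_trans (F_dist _ _ hx hy).
by rewrite enorm_gt0 subr_eq0.
Qed.

Lemma sqr_distortion_le (R : rcfType) (xi A B L : R) :
  0 <= xi -> xi <= 1 -> 0 <= A -> 0 <= B -> B <= L ->
  `|A - B| <= xi * B -> `|A ^+ 2 - B ^+ 2| <= 3 * xi * L ^+ 2.
Proof.
move=> xi_ge0 xi_le1 A_ge0 B_ge0 BL; rewrite ler_norml => /andP[h1 h2].
have A_le : A <= (1 + xi) * B by lra.
have le_A : (1 - xi) * B <= A by lra.
have sA1 : A ^+ 2 <= ((1 + xi) * B) ^+ 2 by rewrite lerXn2r // nnegrE; nra.
have sA2 : ((1 - xi) * B) ^+ 2 <= A ^+ 2 by rewrite lerXn2r // nnegrE; nra.
have sB : B ^+ 2 <= L ^+ 2 by rewrite lerXn2r // nnegrE; lra.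
have xiB : xi * B ^+ 2 <= xi * L ^+ 2 by rewrite ler_wpM2l.
have xi2B : xi ^+ 2 * B ^+ 2 <= xi * B ^+ 2.
  by rewrite ler_wpM2r ?sqr_ge0 // expr2; nra.
rewrite ler_norml; apply/andP; split; nra.
Qed.

Lemma dot_displacement_le (R : rcfType) (m : nat) (v : 'I_m.+1 -> 'rV[R]_m) F xi x k :
  distortion_on v F xi -> 0 <= xi -> xi <= 1 -> F (v k) = v k -> in_simplex v x ->
  `|dot (F x - x) (v k - x) - dot (F x - x) (F x - x) / 2|
    <= 3 * xi * longest_edge v ^+ 2 / 2.
Proof.
move=> F_dist xi_ge0 xi_le1 Fk hx.
have := F_dist _ _ hx (in_simplex_vertex v k); rewrite Fk => hd.
have := sqr_distortion_le xi_ge0 xi_le1 (enorm_ge0 _) (enorm_ge0 _)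
  (enorm_sub_vertex_le k hx) hd.
have -> : F x - v k = (F x - x) - (v k - x) by rewrite opprB addrA subrK.
rewrite -[x - v k]opprB enormN enorm_sqrB enorm_sq.
set E := dot _ (v k - x); set D := dot _ _.
have -> : D - 2 * E + enorm (v k - x) ^+ 2 - enorm (v k - x) ^+ 2 = - 2 * (E - D / 2).
  by field.
by rewrite normrM normrN normr_nat ler_pdivlMr //; lra.
Qed.

Unset Implicit Arguments.

Theorem mainTheorem4 (R : rcfType) (m : nat) (v : 'I_m.+1 -> 'rV[R]_m)
  (F : 'rV[R]_m -> 'rV[R]_m) (xi a : R) :
  (0 < m)%N ->
  aff_indep v ->
  is_min_altitude v a ->
  distortion_on v F xi ->
  (forall i, F (v i) = v i) ->
  xi <= 1 ->
  forall x, in_simplex v x ->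
    enorm (x - F x) <= 3 * xi * longest_edge v / thickness v a.
Proof.
move=> m_gt0 v_indep min_a F_dist F_fix xi_le1 x hx.
have [a_gt0 a_le] := min_altitudeE v_indep m_gt0 min_a.
have xi_ge0 : 0 <= xi.
  have [j j0] := exists_other_vertex m_gt0 ord0.
  apply: distortion_on_ge0 F_dist (in_simplex_vertex v ord0) (in_simplex_vertex v j) _.
  by apply: contra_neq j0 => /(vertex_inj v_indep).
have := enorm_le_of_dot_bound v_indep a_gt0 a_le
  (fun k => dot_displacement_le F_dist xi_ge0 xi_le1 (F_fix k) hx).
rewrite -enormN opprB /thickness invf_div !mulrA => /le_trans; apply.
rewrite ler_pM2r ?invr_gt0 //.
set L := longest_edge v.
have L_ge0 : 0 <= L := le_trans (enorm_ge0 _) (longest_edge_ge v ord0 ord0).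
have m_ge1 : 1 <= m%:R :> R by rewrite ler1n.
have P_ge0 : 0 <= 3 * xi * L * L by rewrite !mulr_ge0.
rewrite -natr1 [leLHS](_ : _ = (m%:R + 1) / 2 * (3 * xi * L * L)); last by ring.
rewrite [leRHS](_ : _ = m%:R * (3 * xi * L * L)); last by ring.
by rewrite ler_wpM2r //; lra.
Qed.
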